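(* Let $\mathbf G(\mathbf x_1),\ldots,\mathbf G(\mathbf x_N)$ be real $m\times s$ matrices such that the column space of the $m\times Ns$ matrix $(\mathbf G(\mathbf x_1),\ldots,\mathbf G(\mathbf x_N))$ is all of $\mathbb R^m$. Consider the following procedure (mKYM). Set $\mathcal S\gets\emptyset$ and $\mathbf P\gets\mathbf I_m$. Repeat: (1) choose any $\mathbf v\in\mathcal C(\mathbf P)$ with $\mathbf v\neq\mathbf 0_m$; (2) choose any $i^*\in\mathrm{argmax}_{i\in\{1,\ldots,N\}\setminus\mathcal S}\lVert\mathbf v^T\mathbf G(\mathbf x_i)\rVert^2$ (Euclidean norm); (3) set $\mathcal S\gets\mathcal S\cup\{i^*\}$; (4) if $|\mathcal S|=m$, stop the loop; (5) set $\widetilde{\mathbf G}\gets\mathbf P\mathbf G(\mathbf x_{i^*})$ and $\mathbf P\gets\mathbf P-\widetilde{\mathbf G}\widetilde{\mathbf G}^+$; until $\mathrm{tr}[\mathbf P]<0.5$. Finally output the design $\mathbf w$ that is uniform on $\{\mathbf x_i: i\in\mathcal S\}$, i.e., $w_i=1/|\mathcal S|$ for $i\in\mathcal S$ and $w_i=0$ otherwise. Then, for any choices made in steps (1) and (2), the procedure terminates with a set $\mathcal S$ of size at most $m$, and the output design $\mathbf w$ is nonsingular, i.e., $\mathbf M(\mathbf w)=\sum_{i=1}^N w_i\mathbf G(\mathbf x_i)\mathbf G^T(\mathbf x_i)$ is nonsingular.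
   Context: $\mathcal C(\mathbf A)$ denotes the column space of a matrix $\mathbf A$, and $\mathbf A^+$ its Moore–Penrose pseudoinverse. A design is a vector $\mathbf w\in\mathbb R^N$ with nonnegative components summing to $1$; it is nonsingular if its information matrix $\mathbf M(\mathbf w)$ is nonsingular. *)

From HB Require Import structures.
From mathcomp Require Import all_boot all_order all_algebra.
From mathcomp Require Import reals.
Set Implicit Arguments. Unset Strict Implicit. Unset Printing Implicit Defensive.
Import Order.TTheory GRing.Theory Num.Theory.
Local Open Scope ring_scope.

Definition is_MP_inverse (R : realType) (m n : nat)
  (A : 'M[R]_(m, n)) (X : 'M[R]_(n, m)) : Prop :=
  [/\ A *m X *m A = A, X *m A *m X = X,
      (A *m X)^T = A *m X & (X *m A)^T = X *m A].

Definition in_colspace (R : realType) (m n : nat) (A : 'M[R]_(m, n)) (v : 'cV[R]_m)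
  : Prop := exists u : 'cV[R]_n, v = A *m u.

Definition sqnorm_row (R : realType) (n : nat) (x : 'rV[R]_n) : R :=
  \sum_(j < n) x 0 j ^+ 2.

Definition Gcat (R : realType) (m s N : nat) (G : 'I_N -> 'M[R]_(m, s)) :=
  \mxrow_(i < N) G i.

Record mkym_state (R : realType) (m N : nat) := MkState {
  st_S : {set 'I_N};
  st_P : 'M[R]_m;
  st_done : bool }.

Definition mkym_init (R : realType) (m N : nat) : mkym_state R m N :=
  MkState set0 1%:M false.

(* one iteration of the repeat-loop, with the choices of steps (1) and (2)
   left arbitrary *)
Definition mkym_step (R : realType) (m s N : nat) (G : 'I_N -> 'M[R]_(m, s))
  (st st' : mkym_state R m N) : Prop :=
  st_done st = false /\
  exists (v : 'cV[R]_m) (i : 'I_N),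
    [/\ in_colspace (st_P st) v, v != 0, i \notin st_S st,
        (forall j, j \notin st_S st ->
            sqnorm_row (v^T *m G j) <= sqnorm_row (v^T *m G i)) &
        let S' := i |: st_S st in
        if #|S'| == m then st' = MkState S' (st_P st) true
        else exists X : 'M[R]_(s, m),
          is_MP_inverse (st_P st *m G i) X /\
          let P' := st_P st - (st_P st *m G i) *m X in
          st' = MkState S' P' (\tr P' < 2^-1)].

Inductive mkym_reachable (R : realType) (m s N : nat) (G : 'I_N -> 'M[R]_(m, s))
  : mkym_state R m N -> Prop :=
| reach_init : mkym_reachable G (mkym_init R m N)
| reach_step st st' : mkym_reachable G st -> mkym_step G st st' ->
    mkym_reachable G st'.

Definition design_w (R : realType) (N : nat) (S : {set 'I_N}) : 'I_N -> R :=
  fun i => if i \in S then (#|S|%:R)^-1 else 0.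

Definition info_mx (R : realType) (m s N : nat) (G : 'I_N -> 'M[R]_(m, s))
  (w : 'I_N -> R) : 'M[R]_m :=
  \sum_(i < N) w i *: (G i *m (G i)^T).

From HB Require Import structures.
From mathcomp Require Import all_boot all_order all_algebra.
From mathcomp Require Import reals.
From mathcomp Require Import lra.
Set Implicit Arguments. Unset Strict Implicit. Unset Printing Implicit Defensive.
Import Order.TTheory GRing.Theory Num.Theory.
Local Open Scope ring_scope.

(* Along the loop P stays an orthogonal projector with P G(x_j) = 0 for j in S
   and I_m - P a combination of the G(x_j), j in S.  A nonzero v in C(P) is
   orthogonal to every chosen G(x_j) but, the G(x_j) spanning R^m, not to all
   of them; hence the maximizer i* has P G(x_{i*}) <> 0, and subtracting the
   projector onto C(P G(x_{i*})) lowers rank P = tr P by at least one while S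
   grows by one.  So rank P + |S| <= m, and when the loop stops (tr P < 1/2, or
   |S| = m) the deflated projector is 0.  Then I_m is a combination of the
   chosen G(x_j), so u M(w) u^T = sum_{j in S} |u G(x_j)|^2 / |S| vanishes only
   for u = 0. *)

Definition orthoproj (R : pzRingType) (n : nat) (P : 'M[R]_n) : Prop :=
  P^T = P /\ P *m P = P.

Definition in_Gspan (R : pzRingType) (m s N n : nat) (G : 'I_N -> 'M[R]_(m, s))
    (S : {set 'I_N}) (M : 'M[R]_(m, n)) : Prop :=
  exists Y : 'I_N -> 'M[R]_(s, n), M = \sum_(j in S) G j *m Y j.

Section SumOfSquares.
Variable R : realFieldType.

Lemma rv_mul_trmx00 n (u : 'rV[R]_n) : (u *m u^T) 0 0 = \sum_j u 0 j ^+ 2.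
Proof. by rewrite mxE; apply: eq_bigr => j _; rewrite mxE expr2. Qed.

Lemma rv_sqnorm_eq0 n (u : 'rV[R]_n) : (\sum_j u 0 j ^+ 2 == 0) = (u == 0).
Proof.
apply/eqP/eqP => [sum0 | ->]; last by rewrite big1 // => j _; rewrite mxE expr0n.
apply/rowP => j; apply/eqP; rewrite mxE -sqrf_eq0; apply/eqP.
by apply: (psumr_eq0P _ sum0) => // i _; apply: sqr_ge0.
Qed.

Lemma rv_mul_trmx_eq0 n (u : 'rV[R]_n) : u *m u^T = 0 -> u = 0.
Proof. by move=> uu0; apply/eqP; rewrite -rv_sqnorm_eq0 -rv_mul_trmx00 uu0 mxE. Qed.

Lemma row_free_gram_unit k n (B : 'M[R]_(k, n)) : row_free B -> B *m B^T \in unitmx.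
Proof.
move=> freeB; rewrite -row_free_unit; apply: inj_row_free => v vBB0.
apply/eqP; rewrite -(mulmx_free_eq0 _ freeB); apply/eqP/rv_mul_trmx_eq0.
by rewrite trmx_mul mulmxA -(mulmxA v) vBB0 mul0mx.
Qed.

Lemma natr_lt_half n : ((n%:R : R) < 2^-1) = (n == 0)%N.
Proof.
case: n => [|n]; first by rewrite invr_gt0 ltr0n.
have n1_ge1 : 1 <= n.+1%:R :> R by rewrite ler1n.
by apply/negbTE; rewrite -leNgt; lra.
Qed.

End SumOfSquares.

Section SqnormRow.
Variable R : realType.

Lemma sqnorm_row_ge0 n (x : 'rV[R]_n) : 0 <= sqnorm_row x.
Proof. by apply: sumr_ge0 => j _; apply: sqr_ge0. Qed.

Lemma sqnorm_row_eq0 n (x : 'rV[R]_n) : (sqnorm_row x == 0) = (x == 0).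
Proof. exact: rv_sqnorm_eq0. Qed.

End SqnormRow.

Section TraceRank.
Variable R : fieldType.

Lemma mxtrace_idem n (P : 'M[R]_n) : P *m P = P -> \tr P = (\rank P)%:R.
Proof.
move=> idP; have [L LC] := row_fullP (col_base_full P).
have [K FK] := row_freeP (row_base_free P).
set C := col_base P in LC *; set F := row_base P in FK *.
have defP : P = C *m F by rewrite mulmx_base.
clearbody C F.
have FC : F *m C = 1%:M.
  have idCF : C *m F *m (C *m F) = C *m F by rewrite -defP.
  have := congr1 (fun M => L *m M *m K) idCF.
  by rewrite !mulmxA LC mul1mx -!mulmxA FK mulmx1.
by rewrite [in LHS]defP mxtrace_mulC FC mxtrace1.
Qed.

Lemma mxtrace_mulmx_ginv m n (A : 'M[R]_(m, n)) X :
  A *m X *m A = A -> \tr (A *m X) = (\rank A)%:R.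
Proof.
move=> AXA; rewrite mxtrace_idem; last by rewrite mulmxA AXA.
by congr _%:R; apply/eqP; rewrite eqn_leq mxrankM_maxl -{1}AXA mxrankM_maxl.
Qed.

End TraceRank.

Lemma gram_pinv_sym (R : fieldType) k n (B : 'M[R]_(k, n)) :
  (B^T *m invmx (B *m B^T) *m B)^T = B^T *m invmx (B *m B^T) *m B.
Proof. by rewrite !trmx_mul trmxK trmx_inv trmx_mul trmxK mulmxA. Qed.

Lemma is_MP_inverse_full_rank_factor (R : realType) m r n
    (C : 'M[R]_(m, r)) (F : 'M[R]_(r, n)) :
  C^T *m C \in unitmx -> F *m F^T \in unitmx ->
  is_MP_inverse (C *m F)
    (F^T *m invmx (F *m F^T) *m (invmx (C^T *m C) *m C^T)).
Proof.
move=> uC uF; set Cp := invmx _ *m C^T; set Fp := F^T *m _.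
have CpC : Cp *m C = 1%:M by rewrite -mulmxA mulVmx.
have FFp : F *m Fp = 1%:M by rewrite mulmxA mulmxV.
have AX : C *m F *m (Fp *m Cp) = C *m Cp by rewrite -mulmxA (mulmxA F) FFp mul1mx.
have XA : Fp *m Cp *m (C *m F) = Fp *m F by rewrite -mulmxA (mulmxA Cp) CpC mul1mx.
split.
- by rewrite AX mulmxA -(mulmxA C) CpC mulmx1.
- by rewrite XA mulmxA -(mulmxA Fp) FFp mulmx1.
- by rewrite AX /Cp mulmxA; have := gram_pinv_sym C^T; rewrite trmxK.
- by rewrite XA gram_pinv_sym.
Qed.

Lemma MP_inverse_exists (R : realType) m n (A : 'M[R]_(m, n)) :
  exists X, is_MP_inverse A X.
Proof.
have uC : (col_base A)^T *m col_base A \in unitmx.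
  rewrite -{2}(trmxK (col_base A)) row_free_gram_unit // /row_free mxrank_tr.
  exact: col_base_full.
have uF : row_base A *m (row_base A)^T \in unitmx.
  by rewrite row_free_gram_unit ?row_base_free.
eexists; rewrite -[X in is_MP_inverse X]mulmx_base.
exact: is_MP_inverse_full_rank_factor.
Qed.

Section Deflation.
Variables (R : numFieldType) (m s : nat).
Variables (P : 'M[R]_m) (B : 'M[R]_(m, s)) (X : 'M[R]_(s, m)).

Lemma deflate_complement :
  1%:M - (P - P *m B *m X) = (1%:M - P) *m (1%:M - B *m X) + B *m X.
Proof.
by rewrite mulmxBl !mulmxBr !mul1mx mulmx1 mulmxA opprB [RHS]addrAC subrK.
Qed.

Hypothesis projP : orthoproj P.
Hypothesis AXA : P *m B *m X *m (P *m B) = P *m B.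
Hypothesis symAX : (P *m B *m X)^T = P *m B *m X.

Lemma deflate_mulmx_proj : (P - P *m B *m X) *m P = P - P *m B *m X.
Proof.
case: projP => symP idP; rewrite mulmxBl idP; congr (_ - _).
by apply: trmx_inj; rewrite trmx_mul symAX symP !mulmxA idP.
Qed.

Lemma deflate_orthoproj : orthoproj (P - P *m B *m X).
Proof.
case: projP => symP idP; split; first by rewrite linearB /= symP symAX.
rewrite mulmxBr deflate_mulmx_proj mulmxBl !mulmxA idP.
by rewrite -(mulmxA (P *m B *m X) P B) AXA subrr subr0.
Qed.

Lemma deflate_mulmx_eq0 n (C : 'M[R]_(m, n)) :
  P *m C = 0 -> (P - P *m B *m X) *m C = 0.
Proof. by move=> PC0; rewrite -deflate_mulmx_proj -mulmxA PC0 mulmx0. Qed.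

Lemma deflate_mulmx_self : (P - P *m B *m X) *m B = 0.
Proof.
case: projP => _ idP.
by rewrite -deflate_mulmx_proj -mulmxA mulmxBl mulmxA idP AXA subrr.
Qed.

Lemma deflate_rank : (\rank (P - P *m B *m X)%R + \rank (P *m B))%N = \rank P.
Proof.
case: deflate_orthoproj => _ idP'; case: projP => _ idP.
apply/eqP; rewrite -(@eqr_nat R) natrD -(mxtrace_mulmx_ginv AXA).
by rewrite -!mxtrace_idem // linearB /= subrK.
Qed.

End Deflation.

Section GSpan.
Variables (R : pzRingType) (m s N : nat) (G : 'I_N -> 'M[R]_(m, s)).

Lemma in_Gspan0 n (S : {set 'I_N}) : in_Gspan G S (0 : 'M[R]_(m, n)).
Proof. by exists (fun _ => 0); rewrite big1 // => j _; rewrite mulmx0. Qed.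

Lemma in_GspanU1 n p (S : {set 'I_N}) i
    (M : 'M[R]_(m, n)) (K : 'M[R]_(n, p)) (L : 'M[R]_(s, p)) :
  i \notin S -> in_Gspan G S M -> in_Gspan G (i |: S) (M *m K + G i *m L).
Proof.
move=> iS [Y ->]; exists (fun j => if j == i then L else Y j *m K).
rewrite big_setU1 //= eqxx addrC mulmx_suml; congr (_ + _).
apply: eq_bigr => j jS; have /negPf-> : j != i by apply: contraNneq iS => <-.
by rewrite mulmxA.
Qed.

Lemma in_Gspan_mul_eq0 n p (S : {set 'I_N}) (u : 'M[R]_(p, m))
    (M : 'M[R]_(m, n)) :
  {in S, forall j, u *m G j = 0} -> in_Gspan G S M -> u *m M = 0.
Proof.
move=> uG [Y ->]; rewrite mulmx_sumr big1 // => j jS.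
by rewrite mulmxA uG ?mul0mx.
Qed.

End GSpan.

Section Mkym.
Variables (R : realType) (m s N : nat) (G : 'I_N -> 'M[R]_(m, s)).
Hypothesis spanG : forall v : 'cV[R]_m, in_colspace (Gcat G) v.

Lemma Gcat_orth_eq0 (v : 'cV[R]_m) : (forall j, v^T *m G j = 0) -> v = 0.
Proof.
move=> vG; have [u defv] := spanG v.
have vGcat : v^T *m Gcat G = 0.
  by rewrite /Gcat mul_mxrow (eq_mxrow (B_ := fun=> 0 : 'M_(1, s))) ?mxrow0.
apply: trmx_inj; rewrite trmx0; apply: rv_mul_trmx_eq0.
by rewrite trmxK {2}defv mulmxA vGcat mul0mx.
Qed.

Lemma orthoproj_colspace (P : 'M[R]_m) v :
  orthoproj P -> in_colspace P v -> v^T *m P = v^T.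
Proof. by case=> symP idP [u ->]; rewrite trmx_mul symP -mulmxA idP. Qed.

Lemma argmax_proj_neq0 (P : 'M[R]_m) (S : {set 'I_N}) v i :
  orthoproj P -> {in S, forall j, P *m G j = 0} -> in_colspace P v -> v != 0 ->
  (forall j, j \notin S -> sqnorm_row (v^T *m G j) <= sqnorm_row (v^T *m G i)) ->
  P *m G i != 0.
Proof.
move=> projP PS Pv v0 imax; apply: contra_neq v0 => PGi0.
have vP := orthoproj_colspace projP Pv.
apply: Gcat_orth_eq0 => j; have [jS | jNS] := boolP (j \in S).
  by rewrite -vP -mulmxA PS ?mulmx0.
apply/eqP; rewrite -sqnorm_row_eq0 eq_le sqnorm_row_ge0 andbT.
have vGi0 : v^T *m G i = 0 by rewrite -vP -mulmxA PGi0 mulmx0.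
have /eqP sqnorm0 : sqnorm_row (0 : 'rV[R]_s) == 0 by rewrite sqnorm_row_eq0.
by have := imax j jNS; rewrite vGi0 sqnorm0.
Qed.

Lemma design_unit (S : {set 'I_N}) :
  in_Gspan G S 1%:M -> info_mx G (design_w R S) \in unitmx.
Proof.
move=> spanS; rewrite -row_free_unit; apply: inj_row_free => u uM0.
suff uG : {in S, forall j, u *m G j = 0}.
  by rewrite -[u]mulmx1 (in_Gspan_mul_eq0 uG).
have w_ge0 i : 0 <= design_w R S i.
  by rewrite /design_w; case: ifP => // _; rewrite invr_ge0 ler0n.
have quad0 : \sum_i design_w R S i * sqnorm_row (u *m G i) = 0.
  have uMu0 : (u *m info_mx G (design_w R S) *m u^T) 0 0 = 0.
    by rewrite uM0 mul0mx mxE.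
  rewrite -[RHS]uMu0 /info_mx mulmx_sumr mulmx_suml summxE.
  apply: eq_bigr => i _.
  rewrite -scalemxAr -scalemxAl mxE !mulmxA -(mulmxA (u *m G i)) -trmx_mul.
  by rewrite rv_mul_trmx00.
move=> j jS; apply/eqP; rewrite -sqnorm_row_eq0.
have /eqP := psumr_eq0P (fun i _ => mulr_ge0 (w_ge0 i) (sqnorm_row_ge0 _))
  quad0 (i := j) isT.
rewrite mulf_eq0 => /orP[|//].
rewrite /design_w jS invr_eq0 pnatr_eq0 cards_eq0 => /eqP S0.
by rewrite S0 inE in jS.
Qed.

Lemma mkym_progress (S : {set 'I_N}) (P : 'M[R]_m) :
  orthoproj P -> {in S, forall j, P *m G j = 0} -> P != 0 ->
  exists st', mkym_step G (MkState S P false) st'.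
Proof.
move=> projP PS P0.
have /existsP[j0 Pj0] : [exists j, col j P != 0].
  apply: contraNT P0 => /existsPn colP0; apply/eqP/matrixP => a j.
  by have /negPn/eqP/matrixP/(_ a 0) := colP0 j; rewrite !mxE.
set v := col j0 P.
have Pv : in_colspace P v by exists (delta_mx j0 0); rewrite /v colE.
have /existsP[i0 i0S] : [exists i, i \notin S].
  apply: contraNT Pj0 => /existsPn allS; apply/eqP/Gcat_orth_eq0 => j.
  rewrite -(orthoproj_colspace projP Pv) -mulmxA PS ?mulmx0 //; exact/negPn/allS.
have [i iS imax] := arg_maxP (fun i => sqnorm_row (v^T *m G i))
  (i0S : i0 \in [pred i | i \notin S]).
case cardm: (#|i |: S| == m).
  by exists (MkState (i |: S) P true); split => //; exists v, i; rewrite /= cardm.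
have [X MPX] := MP_inverse_exists (P *m G i).
by eexists; split => //; exists v, i; split => //=; rewrite cardm; exists X.
Qed.

Definition mkym_loop_inv (S : {set 'I_N}) (P : 'M[R]_m) : Prop :=
  [/\ orthoproj P, {in S, forall j, P *m G j = 0}, in_Gspan G S (1%:M - P)
    & (\rank P + #|S| <= m)%N].

Definition mkym_inv (st : mkym_state R m N) : Prop :=
  if st_done st then (#|st_S st| <= m)%N /\ in_Gspan G (st_S st) 1%:M
  else mkym_loop_inv (st_S st) (st_P st) /\ st_P st != 0.

Lemma mkym_loop_inv0 S : mkym_loop_inv S 0 -> (#|S| <= m)%N /\ in_Gspan G S 1%:M.
Proof. by case=> _ _; rewrite subr0 mxrank0 add0n. Qed.

Lemma mkym_loop_inv_deflate S P i X :
  mkym_loop_inv S P -> i \notin S -> P *m G i != 0 ->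
  is_MP_inverse (P *m G i) X ->
  mkym_loop_inv (i |: S) (P - P *m G i *m X).
Proof.
move=> [projP PS spanP rankP] iS PGi0 [AXA _ symAX _]; split.
- exact: deflate_orthoproj.
- move=> j /setU1P[-> | /PS]; first exact: deflate_mulmx_self.
  exact: deflate_mulmx_eq0.
- by rewrite deflate_complement; apply: in_GspanU1.
- rewrite cardsU1 iS add1n addnS; apply: leq_trans rankP.
  rewrite -(deflate_rank projP AXA symAX) addnAC -addn1 leq_add2l.
  by rewrite lt0n mxrank_eq0.
Qed.

Lemma mkym_inv_init : (0 < m)%N -> mkym_inv (mkym_init R m N).
Proof.
move=> m_gt0; split; last by rewrite -mxrank_eq0 mxrank1 -lt0n.
split.
- by split; [apply: trmx1 | apply: mulmx1].
- by move=> j; rewrite inE.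
- by rewrite subrr; apply: in_Gspan0.
- by rewrite mxrank1 cards0 addn0.
Qed.

Lemma mkym_inv_step st st' : mkym_inv st -> mkym_step G st st' -> mkym_inv st'.
Proof.
case: st => S P done inv [/= done0 [v [i [Pv v0 iS imax next]]]].
move: inv; rewrite /mkym_inv done0 /= => -[loopP P0].
have PGi0 : P *m G i != 0.
  by case: loopP => projP PS _ _; apply: argmax_proj_neq0 imax.
move: next => /=; case: ifP => [/eqP cardm -> | _ [X [MPX ->]]] /=.
  (* Here P is kept as is; deflating it anyway yields 0 since |S| = m. *)
  have [X MPX] := MP_inverse_exists (P *m G i).
  have loopP' := mkym_loop_inv_deflate loopP iS PGi0 MPX.
  suff P'0 : P - P *m G i *m X = 0 by move: loopP'; rewrite P'0 => /mkym_loop_inv0.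
  have [_ _ _] := loopP'; rewrite cardm => rank_le.
  by apply/eqP; rewrite -mxrank_eq0 -leqn0 -(leq_add2r m) add0n.
have loopP' := mkym_loop_inv_deflate loopP iS PGi0 MPX.
have [[_ idP'] _ _ _] := loopP'.
rewrite (mxtrace_idem idP') natr_lt_half mxrank_eq0.
case: eqP => [P'0 | /eqP P'0 //].
by move: loopP'; rewrite P'0 => /mkym_loop_inv0.
Qed.

Lemma mkym_reachable_inv st : (0 < m)%N -> mkym_reachable G st -> mkym_inv st.
Proof.
move=> m_gt0; elim=> [|st0 st1 _ inv0 step]; first exact: mkym_inv_init.
exact: mkym_inv_step inv0 step.
Qed.

Lemma mkym_step_card st st' :
  mkym_step G st st' -> #|st_S st'| = #|st_S st|.+1.
Proof.
case=> _ [v [i [_ _ iS _ next]]].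
have -> : st_S st' = i |: st_S st.
  by move: next => /=; case: ifP => [_ -> | _ [X [_ ->]]].
by rewrite cardsU1 iS.
Qed.

Lemma mkym_acc st :
  Acc (fun st' st => mkym_step G st st') st.
Proof.
have [n] := ubnP (N - #|st_S st|).
elim: n st => [|n IH] st; first by rewrite ltn0.
move=> lt_n; constructor => st' step; apply: IH.
have := max_card (st_S st'); rewrite card_ord (mkym_step_card step) => lt_N.
by rewrite subnS -ltnS prednK // subn_gt0.
Qed.

End Mkym.

Theorem theorem2 (R : realType) (m s N : nat) (G : 'I_N -> 'M[R]_(m, s)) :
  (0 < m)%N ->
  (forall v : 'cV[R]_m, in_colspace (Gcat G) v) ->
  Acc (fun st' st => mkym_step G st st') (mkym_init R m N) /\
  (forall st : mkym_state R m N, mkym_reachable G st ->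
    [/\ (#|st_S st| <= m)%N,
        (st_done st = false -> exists st', mkym_step G st st') &
        (st_done st = true -> info_mx G (design_w R (st_S st)) \in unitmx)]).
Proof.
move=> m_gt0 spanG; split=> [|st /(mkym_reachable_inv spanG m_gt0)].
  exact: mkym_acc.
case: st => S P [] /=.
  by case=> cardS spanS; split=> // _; apply: design_unit.
case=> -[projP PS _ rankP] P0; split=> // [|_].
  exact: leq_trans (leq_addl _ _) rankP.
exact: mkym_progress.
Qed.
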